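(* Let $\Gamma$ be a semigroupoid with object set $S$, $\tau\colon S\to X$ a map, and for $\gamma\in\Gamma$ let $L(\gamma)$ be the densely defined operator from $\ell^2_\tau(\Gamma;\tau(d(\gamma)))$ to $\ell^2_\tau(\Gamma;\tau(c(\gamma)))$ whose domain is the finitely supported functions, given by $L(\gamma)\delta_\beta=\delta_{\gamma\beta}$ if $c(\beta)=d(\gamma)$ and $L(\gamma)\delta_\beta=0$ otherwise. Let $m_\gamma\colon\Gamma^{d(\gamma)}\to\Gamma^{c(\gamma)}$, $m_\gamma(\alpha)=\gamma\alpha$. Then: (i) for $\beta\in\Gamma^{c(\gamma)}$, $\delta_\beta\in\mathrm{dom}\,L(\gamma)^*$ if $m_\gamma^{-1}(\{\beta\})$ is finite, while if $m_\gamma^{-1}(\{\beta\})$ is infinite then every vector of $\mathrm{dom}\,L(\gamma)^*$ is orthogonal to $\delta_\beta$; consequently $L(\gamma)$ is closable if and only if $m_\gamma^{-1}(\{\beta\})$ is finite for every $\beta\in\Gamma^{c(\gamma)}$. (ii) $L(\gamma)$ is bounded if and only if there is $N\in\mathbb N$ with $|m_\gamma^{-1}(\{\beta\})|\le N$ for all $\beta\in\Gamma^{c(\gamma)}$, and in that case $\|L(\gamma)\|\le N$. (iii) If $\Gamma$ satisfies: for every $\gamma\in\Gamma$ and $\beta\ne\beta'$ in $\Gamma^{d(\gamma)}$, $\gamma\beta\ne\gamma\beta'$, then each $L(\gamma)$ extends to a partial isometry and $(\tau;L)$ is an orthogonal representation of $\Gamma$ on $\{\ell^2_\tau(\Gamma;x)\}_{x\in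 X}$.
   Context: A semigroupoid $(\Gamma;S;d;c;\cdot)$ consists of nonempty sets $\Gamma,S$, maps $d,c\colon\Gamma\to S$, and for all $\alpha,\beta$ with $d(\alpha)=c(\beta)$ a product $\alpha\beta$ with $d(\alpha\beta)=d(\beta)$, $c(\alpha\beta)=c(\alpha)$, associative whenever defined; $\Gamma^s=\{\alpha:c(\alpha)=s\}$. For $x\in X$, $\ell^2_\tau(\Gamma;x)$ is the Hilbert space with orthonormal basis $\{\delta_\gamma:\gamma\in\Gamma,\ \tau(c(\gamma))=x\}$ (the zero space if this set is empty). A representation of $\Gamma$ on a family of Hilbert spaces $\{\mathcal H_x\}_{x\in X}$ with aggregation $\tau$ is a map $\Phi$ with $\Phi(\alpha)\in\mathcal B(\mathcal H_{\tau(d(\alpha))},\mathcal H_{\tau(c(\alpha))})$ and $\Phi(\alpha\beta)=\Phi(\alpha)\Phi(\beta)$ whenever $d(\alpha)=c(\beta)$; it is orthogonal if whenever $\tau(c(\alpha))=\tau(c(\beta))$ but $c(\alpha)\ne c(\beta)$, the ranges $\Phi(\alpha)\mathcal H_{\tau(d(\alpha))}$ and $\Phi(\beta)\mathcal H_{\tau(d(\beta))}$ are orthogonal. *)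

From HB Require Import structures.
From mathcomp Require Import all_boot all_order all_algebra.
From mathcomp Require Import all_classical all_reals all_analysis.
From mathcomp Require Import complex.
Set Implicit Arguments. Unset Strict Implicit. Unset Printing Implicit Defensive.
Import Order.TTheory GRing.Theory Num.Theory.
Local Open Scope classical_set_scope.
Local Open Scope ring_scope.

Section SemigroupoidL2.
Variables (R : realType) (Γ : choiceType) (S X : Type).
Variables (d c : Γ -> S) (mul : Γ -> Γ -> Γ) (τ : S -> X).

(** Semigroupoid axioms for (Γ; S; d; c; mul); the product [mul a b] is only
    meaningful when [d a = c b] (outside of that it is an arbitrary value). *)
Definition is_semigroupoid : Prop :=
  [/\ inhabited Γ, inhabited S,
      (forall a b, d a = c b -> d (mul a b) = d b),
      (forall a b, d a = c b -> c (mul a b) = c a) &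
      (forall a b g, d a = c b -> d b = c g ->
         mul (mul a b) g = mul a (mul b g))].

Definition fibre (s : S) : set Γ := [set g | c g = s].

Definition m_pre (γ β : Γ) : set Γ := [set a | c a = d γ /\ mul γ a = β].

Definition vec := Γ -> R[i].

Definition re (z : R[i]) : R := let: Complex a _ := z in a.
Definition im (z : R[i]) : R := let: Complex _ b := z in b.
Definition sqn (z : R[i]) : R := re z ^+ 2 + im z ^+ 2.
Definition cabs (z : R[i]) : R := Num.sqrt (sqn z).

Definition l2n2 (f : vec) : \bar R := \esum_(i in [set: Γ]) (sqn (f i))%:E.

Definition l2norm (f : vec) : R := Num.sqrt (fine (l2n2 f)).

Definition l2sp (x : X) : set vec :=
  [set f | (forall g, τ (c g) <> x -> f g = 0) /\ (l2n2 f < +oo)%E].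

Definition supp (f : vec) : set Γ := [set g | f g != 0].

Definition findom (x : X) : set vec := [set f | l2sp x f /\ finite_set (supp f)].

Definition rsum (u : Γ -> R) : R :=
  fine (\esum_(i in [set: Γ]) (Num.max (u i) 0)%:E) -
  fine (\esum_(i in [set: Γ]) (Num.max (- u i) 0)%:E).

Definition csum (z : Γ -> R[i]) : R[i] :=
  Complex (rsum (fun i => re (z i))) (rsum (fun i => im (z i))).

(** inner product of ℓ² (linear in the first variable) *)
Definition ip (f g : vec) : R[i] := csum (fun i => f i * conjc (g i)).

Definition delta (b : Γ) : vec := fun g => if g == b then 1 else 0.

(** L(γ) on finitely supported vectors: L(γ) δ_β = δ_{γβ} if c β = d γ, 0 otherwise *)
Definition Lop (γ : Γ) (f : vec) : vec :=
  fun a => \sum_(b \in [set b | c b = d γ /\ mul γ b = a]) f b.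

Definition adj_dom (γ : Γ) : set vec :=
  [set g | l2sp (τ (c γ)) g /\
     exists K : R, forall f, findom (τ (d γ)) f ->
       cabs (ip (Lop γ f) g) <= K * l2norm f].

(** closability of the densely defined operator L(γ): the closure of its graph
    is the graph of an operator *)
Definition closable (γ : Γ) : Prop :=
  forall (u : nat -> vec) (h : vec),
    (forall n, findom (τ (d γ)) (u n)) -> l2sp (τ (c γ)) h ->
    l2n2 (u n) @[n --> \oo] --> 0%E ->
    l2n2 (fun i => Lop γ (u n) i - h i) @[n --> \oo] --> 0%E ->
    h = (fun _ => 0).

Definition Lnorm_le (γ : Γ) (K : R) : Prop :=
  forall f, findom (τ (d γ)) f -> l2norm (Lop γ f) <= K * l2norm f.

Definition Lbounded (γ : Γ) : Prop := exists K : R, Lnorm_le γ K.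

Definition bounded_linear (x y : X) (T : vec -> vec) : Prop :=
  [/\ (forall f, l2sp x f -> l2sp y (T f)),
      (forall (a : R[i]) f g, l2sp x f -> l2sp x g ->
         T (fun i => a * f i + g i) = (fun i => a * T f i + T g i)) &
      (exists K : R, forall f, l2sp x f -> l2norm (T f) <= K * l2norm f)].

Definition partial_isometry (x : X) (T : vec -> vec) : Prop :=
  forall f, l2sp x f ->
    (forall k, l2sp x k -> T k = (fun _ => 0) -> ip f k = 0) ->
    l2norm (T f) = l2norm f.

Definition is_representation (Φ : Γ -> vec -> vec) : Prop :=
  (forall γ, bounded_linear (τ (d γ)) (τ (c γ)) (Φ γ)) /\
  (forall a b, d a = c b -> forall f, l2sp (τ (d b)) f ->
     Φ (mul a b) f = Φ a (Φ b f)).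

Definition is_orthogonal_rep (Φ : Γ -> vec -> vec) : Prop :=
  is_representation Φ /\
  (forall a b, τ (c a) = τ (c b) -> c a <> c b ->
     forall f g, l2sp (τ (d a)) f -> l2sp (τ (d b)) g ->
       ip (Φ a f) (Φ b g) = 0).

End SemigroupoidL2.

From HB Require Import structures.
From mathcomp Require Import all_boot all_order all_algebra.
From mathcomp Require Import all_classical all_reals all_analysis.
From mathcomp Require Import complex.
From mathcomp Require Import ring lra finmap.
Import Order.TTheory GRing.Theory Num.Theory numFieldNormedType.Exports.
Set Implicit Arguments. Unset Strict Implicit. Unset Printing Implicit Defensive.
Local Open Scope classical_set_scope.
Local Open Scope ring_scope.

(* L(γ) acts by (L(γ) f)(a) = Σ_{b ∈ m_γ^{-1}(a)} f(b), where m_γ(b) = γ b, and the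
   whole theorem rests on two computations with this formula.
   - Fibrewise Cauchy–Schwarz: |L(γ)f(a)|² ≤ |m_γ^{-1}(a)| Σ_{b ∈ m_γ^{-1}(a)} |f b|².
     Since the fibres are disjoint, summing over a gives ‖L(γ)f‖² ≤ N ‖f‖² when all
     fibres have at most N elements.  Together with ⟨L(γ)f, δ_β⟩ = L(γ)f(β) this
     gives δ_β ∈ dom L(γ)^* for finite fibres, the norm bound in (ii), the
     boundedness in (iii), and closability when all fibres are finite (point
     evaluations of L(γ) are then continuous in ℓ²).
   - Test vectors: for finite F ⊆ m_γ^{-1}(β), the vector t·1_F is finitely supported,
     has squared norm |F| |t|² and L(γ)(t·1_F) = |F| t δ_β.  Letting |F| grow gives
     the infinite case of (i), the necessity in (ii) and, with t = 1/|F|, a sequence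
     witnessing that L(γ) is not closable.
   Under the injectivity hypothesis of (iii), L(γ) is isometric on vectors supported
   in Γ^{d γ} and kills those supported outside, hence is a partial isometry;
   associativity gives L(αβ) = L(α)L(β), and L(α)f is supported in Γ^{c α}, which
   gives orthogonality. *)

Section Estimates.
Variable R : realType.
Implicit Types (z w : R[i]).

Lemma sqn_ge0 z : 0 <= sqn z.
Proof. by case: z => x y; rewrite /sqn /=; apply: addr_ge0; apply: sqr_ge0. Qed.

Lemma sqn0 : sqn (0 : R[i]) = 0.
Proof. by rewrite /sqn /= expr0n /= addr0. Qed.

Lemma sqn_eq0 z : sqn z = 0 -> z = 0.
Proof.
case: z => x y; rewrite /sqn /= => h.
have hx : x ^+ 2 = 0 by apply/eqP; rewrite eq_le sqr_ge0 andbT -h lerDl sqr_ge0.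
have hy : y ^+ 2 = 0 by move: h; rewrite hx add0r.
by move/eqP: hx; rewrite sqrf_eq0 => /eqP ->; move/eqP: hy; rewrite sqrf_eq0 => /eqP ->.
Qed.

Lemma sqnM z w : sqn (z * w) = sqn z * sqn w.
Proof. by case: z => x y; case: w => u v; rewrite /sqn /=; ring. Qed.

Lemma sqn_conj z : sqn (conjc z) = sqn z.
Proof. by case: z => x y; rewrite /sqn /=; ring. Qed.

Lemma sqnB z w : sqn (z - w) = sqn (w - z).
Proof. by case: z => x y; case: w => u v; rewrite /sqn /=; ring. Qed.

Lemma sqnD_le z w : sqn (z + w) <= 2 * (sqn z + sqn w).
Proof.
case: z => x y; case: w => u v; rewrite /sqn /=.
by have := sqr_ge0 (x - u); have := sqr_ge0 (y - v); nra.
Qed.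

Lemma sqn_nat (n : nat) : sqn (n%:R : R[i]) = n%:R ^+ 2.
Proof.
by rewrite -[n%:R in LHS](rmorph_nat (real_complex R)) /sqn /= expr0n addr0.
Qed.

Lemma sqn1 : sqn (1 : R[i]) = 1.
Proof. by have := sqn_nat 1; rewrite expr1n. Qed.

Lemma re_mulconj z : re (z * conjc z) = sqn z.
Proof. by case: z => x y; rewrite /sqn /=; ring. Qed.

Lemma re_sum (T : Type) (s : seq T) (F : T -> R[i]) :
  re (\sum_(i <- s) F i) = \sum_(i <- s) re (F i).
Proof.
elim: s => [|a s IH]; rewrite ?big_nil // !big_cons -IH.
by case: (F a); case: (\sum_(i <- s) F i).
Qed.

Lemma im_sum (T : Type) (s : seq T) (F : T -> R[i]) :
  im (\sum_(i <- s) F i) = \sum_(i <- s) im (F i).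
Proof.
elim: s => [|a s IH]; rewrite ?big_nil // !big_cons -IH.
by case: (F a); case: (\sum_(i <- s) F i).
Qed.

Lemma cauchy_schwarz_real (T : Type) (s : seq T) (F : T -> R) :
  (\sum_(i <- s) F i) ^+ 2 <= (size s)%:R * \sum_(i <- s) F i ^+ 2.
Proof.
elim: s => [|a s IH]; first by rewrite big_nil expr0n /= mul0r.
rewrite !big_cons /= -natr1.
set S := \sum_(i <- s) F i in IH *; set Q := \sum_(i <- s) F i ^+ 2 in IH *.
set n := (size s)%:R in IH *.
have n0 : 0 <= n by rewrite /n ler0n.
have Q0 : 0 <= Q by rewrite /Q sumr_ge0 // => i _; apply: sqr_ge0.
have [n_eq0|n_neq0] := eqVneq n 0.
  have S0 : S = 0 by apply/eqP; rewrite -sqrf_eq0 eq_le sqr_ge0 andbT -(mul0r Q) -n_eq0.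
  by rewrite S0 n_eq0; nra.
have npos : 0 < n by rewrite lt0r n_neq0 n0.
(* the cross term: n · 2aS ≤ n · (Q + n a²) follows from (n a − S)² ≥ 0 and IH *)
have cross : 2 * F a * S <= Q + n * F a ^+ 2.
  by rewrite -(ler_pM2l npos); have := sqr_ge0 (n * F a - S); nra.
nra.
Qed.

Lemma cauchy_schwarz (T : Type) (s : seq T) (F : T -> R[i]) :
  sqn (\sum_(i <- s) F i) <= (size s)%:R * \sum_(i <- s) sqn (F i).
Proof.
rewrite {1}/sqn re_sum im_sum /sqn big_split /= mulrDr.
by apply: lerD; apply: cauchy_schwarz_real.
Qed.

Lemma ler_sqr_scale (a b k : R) : 0 <= a -> a <= k * b -> a ^+ 2 <= k ^+ 2 * b ^+ 2.
Proof. by move=> a0 h; nra. Qed.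

Lemma sqrt_le_nat_scale (n : nat) (u v : R) :
  0 <= v -> u <= n%:R * v -> Num.sqrt u <= n%:R * Num.sqrt v.
Proof.
move=> v0 uv; apply: (@le_trans _ _ (Num.sqrt (n%:R * v))).
  by rewrite ler_sqrt // mulr_ge0 ?ler0n.
rewrite sqrtrM ?ler0n //; apply: ler_wpM2r; first exact: sqrtr_ge0.
rewrite -[X in _ <= X]ger0_norm ?ler0n // -sqrtr_sqr ler_sqrt ?exprn_ge0 ?ler0n //.
by rewrite -natrX ler_nat; case: n {uv} => // n; rewrite expnS leq_pmulr.
Qed.

End Estimates.

Section FinitelySupportedSums.
Variables (R : realType) (T : choiceType).

Lemma esum_finite_support (A : {fset T}) (g : T -> R) :
  (forall i, 0 <= g i) -> (forall i, i \notin A -> g i = 0) ->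
  \esum_(i in [set: T]) (g i)%:E = (\sum_(i <- A) g i)%:E.
Proof.
move=> g0 gA; rewrite (esumID [set` A]); last by move=> i _; rewrite lee_fin.
rewrite [X in (_ + X)%E]esum1 ?adde0; last first.
  by move=> i [_ /= iA]; rewrite gA //; apply/negP.
rewrite setTI esum_fset //; last by move=> *; rewrite lee_fin.
by rewrite -fsbig_seq // sumEFin.
Qed.

Lemma rsum_finite_support (A : {fset T}) (u : T -> R) :
  (forall i, i \notin A -> u i = 0) -> rsum u = \sum_(i <- A) u i.
Proof.
move=> uA; rewrite /rsum !(@esum_finite_support A).
- rewrite /= -sumrB; apply: eq_bigr => i _.
  by rewrite /Order.max; case: ifPn; case: ifPn; lra.
- by move=> i; rewrite le_max lexx orbT.
- by move=> i /uA ->; rewrite oppr0 maxxx.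
- by move=> i; rewrite le_max lexx orbT.
- by move=> i /uA ->; rewrite maxxx.
Qed.

Lemma csum_finite_support (A : {fset T}) (z : T -> R[i]) :
  (forall i, i \notin A -> z i = 0) -> csum z = \sum_(i <- A) z i.
Proof.
move=> zA; rewrite /csum !(@rsum_finite_support A); try by move=> i /zA ->.
by rewrite -re_sum -im_sum; case: (\sum_(i <- A) z i).
Qed.

Lemma rsum_ge0_eq0 (u : T -> R) :
  (forall i, 0 <= u i) -> (\esum_(i in [set: T]) (u i)%:E < +oo)%E ->
  rsum u = 0 -> forall i, u i = 0.
Proof.
move=> u0 ufin; rewrite /rsum.
have -> : \esum_(i in [set: T]) (Num.max (- u i) 0)%:E = 0%E.
  by apply: esum1 => i _; congr EFin; have := u0 i; rewrite /Order.max; case: ifPn; lra.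
have -> : (fun i => (Num.max (u i) 0)%:E) = (fun i => (u i)%:E).
  by apply: funext => i; congr EFin; have := u0 i; rewrite /Order.max; case: ifPn; lra.
rewrite subr0 => sum0.
have ufin' : \esum_(i in [set: T]) (u i)%:E \is a fin_num.
  by rewrite ge0_fin_numE // esum_ge0 // => i _; rewrite lee_fin.
have esum0 : \esum_(i in [set: T]) (u i)%:E = 0%E by rewrite -(fineK ufin') sum0.
move=> i; apply/eqP; rewrite eq_le u0 andbT.
suff : ((u i)%:E <= \esum_(i in [set: T]) (u i)%:E)%E by rewrite esum0 lee_fin.
apply: esum_ge; exists [set i]; first by split => //; apply: finite_set1.
by rewrite fsbig_set1.
Qed.

End FinitelySupportedSums.

Section L2Vectors.
Variables (R : realType) (Γ : choiceType).
Implicit Types (f g : vec R Γ).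

Lemma l2n2_ge0 f : (0 <= l2n2 f)%E.
Proof. by apply: esum_ge0 => i _; rewrite lee_fin sqn_ge0. Qed.

Lemma l2n2_finE f : (l2n2 f < +oo)%E -> l2n2 f = (fine (l2n2 f))%:E.
Proof. by move=> h; rewrite fineK // ge0_fin_numE // l2n2_ge0. Qed.

Lemma fine_l2n2_ge0 f : 0 <= fine (l2n2 f).
Proof. by apply: fine_ge0; apply: l2n2_ge0. Qed.

Lemma partial_sum_le_l2n2 f (A : set Γ) : finite_set A -> (l2n2 f < +oo)%E ->
  \sum_(b <- fset_set A) sqn (f b) <= fine (l2n2 f).
Proof.
move=> finA fin; rewrite -lee_fin -l2n2_finE //.
apply: esum_ge; exists A; first by split.
by rewrite fsbig_finite // sumEFin.
Qed.

Lemma term_le_l2n2 f a : (l2n2 f < +oo)%E -> sqn (f a) <= fine (l2n2 f).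
Proof.
move=> fin; have := partial_sum_le_l2n2 (finite_set1 a) fin.
by rewrite fset_set1 big_seq_fset1.
Qed.

Definition indicator (F : {fset Γ}) (t : R[i]) : vec R Γ :=
  fun b => if b \in F then t else 0.

Lemma l2n2_indicator F t : l2n2 (indicator F t) = (#|` F|%:R * sqn t)%:E.
Proof.
rewrite /l2n2 (@esum_finite_support _ _ F); last 2 first.
- by move=> i; apply: sqn_ge0.
- by move=> i iF; rewrite /indicator (negbTE iF) sqn0.
rewrite big_seq (eq_bigr (fun _ => sqn t)) -?big_seq; last by move=> i iF; rewrite /indicator iF.
by rewrite big_const_seq count_predT iter_addr_0 mulr_natl.
Qed.

Lemma ip_indicator1 β (t : R[i]) g : ip (indicator [fset β]%fset t) g = t * conjc (g β).
Proof.
rewrite /ip (@csum_finite_support _ _ [fset β]%fset) ?big_seq_fset1 /indicator ?inE ?eqxx //.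
by move=> i /negbTE ->; rewrite mul0r.
Qed.

Lemma ip_delta f β : ip f (delta R β) = f β.
Proof.
rewrite /ip (@csum_finite_support _ _ [fset β]%fset) ?big_seq_fset1 /delta ?eqxx ?conjc1 ?mulr1 //.
by move=> i; rewrite inE => /negbTE ->; rewrite conjc0 mulr0.
Qed.

Lemma delta_indicator β : delta R β = indicator [fset β]%fset 1.
Proof. by apply: funext => i; rewrite /delta /indicator inE. Qed.

End L2Vectors.

Section LargeSubsets.
Variable T : choiceType.

Lemma infinite_large_subsets (A : set T) : infinite_set A ->
  exists Fs : nat -> {fset T}, forall n, [set` Fs n] `<=` A /\ (n < #|` Fs n|)%N.
Proof.
move=> inf; have large n : exists F : {fset T}, [set` F] `<=` A /\ (n < #|` F|)%N.
  by have [F ? ?] := infinite_set_fset n.+1 inf; exists F.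
by have [Fs ?] := choice large; exists Fs.
Qed.

Lemma large_subset_of_not_card_le (A : set T) (N : nat) : ~ (A #<= `I_N)%card ->
  exists2 F : {fset T}, [set` F] `<=` A & (N < #|` F|)%N.
Proof.
move=> nc; have [finA|infA] := pselect (finite_set A).
  exists (fset_set A); first by rewrite fset_setK.
  rewrite ltnNge; apply/negP => le; apply: nc.
  have /finite_setP [m Am] := finA.
  by rewrite (card_le_eql Am) card_le_II -(card_fset_set Am).
by have [F ? ?] := infinite_set_fset N.+1 infA; exists F.
Qed.

End LargeSubsets.

Section RegularOperator.
Variables (R : realType) (Γ : choiceType) (S X : Type).
Variables (d c : Γ -> S) (mul : Γ -> Γ -> Γ) (τ : S -> X).
Local Notation L := (Lop d c mul).
Local Notation P := (m_pre d c mul).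
Implicit Types (f g : vec R Γ).

Lemma l2sp_delta γ β : c β = c γ -> l2sp c τ (τ (c γ)) (delta R β).
Proof.
move=> cb; split.
  by move=> g ng; rewrite /delta; case: eqP => // e; case: ng; rewrite e cb.
rewrite delta_indicator l2n2_indicator cardfs1 mul1r sqn1; exact: ltry.
Qed.

Lemma Lop_finite_fibre γ f a : finite_set (P γ a) ->
  L γ f a = \sum_(b <- fset_set (P γ a)) f b.
Proof. by move=> h; rewrite /Lop fsbig_finite. Qed.

Lemma Lop_off_image γ f a : (forall b, c b = d γ -> mul γ b <> a) -> L γ f a = 0.
Proof. by move=> h; apply: fsbig1 => b [cb e]; case: (h b cb e). Qed.

Lemma Lop_pointwise_le γ f a (n : nat) : finite_set (P γ a) ->
  (#|` fset_set (P γ a)| <= n)%N -> (l2n2 f < +oo)%E ->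
  sqn (L γ f a) <= n%:R * fine (l2n2 f).
Proof.
move=> finP hn fin; rewrite Lop_finite_fibre //.
apply: le_trans (cauchy_schwarz _ _) _.
apply: ler_pM; rewrite ?ler0n ?ler_nat //; last exact: partial_sum_le_l2n2.
by apply: sumr_ge0 => i _; apply: sqn_ge0.
Qed.

Definition fibres_le (γ : Γ) (N : nat) : Prop :=
  forall a, finite_set (P γ a) /\ (#|` fset_set (P γ a)| <= N)%N.

(* Summing the fibrewise estimate over the disjoint fibres: ‖L(γ)f‖² ≤ N ‖f‖². *)
Lemma l2n2_Lop_le γ (N : nat) f : fibres_le γ N -> (l2n2 f < +oo)%E ->
  (l2n2 (L γ f) <= (N%:R * fine (l2n2 f))%:E)%E.
Proof.
move=> hN fin.
apply: (@le_trans _ _ (\esum_(a in [set: Γ]) \esum_(b in P γ a) (N%:R * sqn (f b))%:E)).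
  apply: le_esum => a _; have [fa na] := hN a.
  rewrite esum_fset //; last by move=> i _; rewrite lee_fin mulr_ge0 ?ler0n ?sqn_ge0.
  rewrite fsbig_finite // sumEFin lee_fin -mulr_sumr Lop_finite_fibre //.
  apply: le_trans (cauchy_schwarz _ _) _.
  apply: ler_wpM2r; first by apply: sumr_ge0 => i _; apply: sqn_ge0.
  by rewrite ler_nat.
rewrite esum_esum; last by move=> *; rewrite lee_fin mulr_ge0 ?ler0n ?sqn_ge0.
rewrite (reindex_esum (fun b => c b = d γ) _ (fun b => (mul γ b, b))); last first.
  split.
  - by move=> b cb /=.
  - by move=> b1 b2 _ _ [_ ->].
  - by move=> [a b] [_ [cb e]]; exists b => //=; rewrite e.
apply: ge_ereal_sup => _ [Y [finY YF] <-].
rewrite fsbig_finite // sumEFin lee_fin -mulr_sumr.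
by apply: ler_wpM2l; [rewrite ler0n | exact: partial_sum_le_l2n2].
Qed.

Lemma l2norm_Lop_le γ (N : nat) f : fibres_le γ N -> (l2n2 f < +oo)%E ->
  l2norm (L γ f) <= N%:R * l2norm f.
Proof.
move=> hN fin; have h := l2n2_Lop_le hN fin.
have fin2 : (l2n2 (L γ f) < +oo)%E by apply: le_lt_trans h (ltry _).
rewrite (l2n2_finE fin2) lee_fin in h.
exact: sqrt_le_nat_scale (fine_l2n2_ge0 f) h.
Qed.

Lemma Lop_indicator γ β F (t : R[i]) : [set` F] `<=` P γ β ->
  L γ (indicator F t) = indicator [fset β]%fset (#|` F|%:R * t).
Proof.
move=> FP; apply: funext => a; rewrite {2}/indicator inE; case: eqP => [->|ne].
  rewrite /Lop -(fsbig_widen [set` F]); last 2 first.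
  - exact: FP.
  - by move=> x [_ /= xF]; rewrite /indicator (negbTE (introN idP xF)).
  rewrite -fsbig_seq // big_seq (eq_bigr (fun _ => t)) -?big_seq.
    by rewrite big_const_seq count_predT iter_addr_0 mulr_natl.
  by move=> i iF; rewrite /indicator iF.
apply: fsbig1 => b [cb e]; rewrite /indicator; case: ifP => // bF.
by have [_ e'] := FP b bF; case: ne; rewrite -e.
Qed.

Lemma findom_indicator γ β F (t : R[i]) : [set` F] `<=` P γ β ->
  findom c τ (τ (d γ)) (indicator F t).
Proof.
move=> FP; split; first split.
- move=> g ng; rewrite /indicator; case: ifP => // gF.
  by have [cg _] := FP g gF; case: ng; rewrite cg.
- by rewrite l2n2_indicator ltry.
apply: (@sub_finite_set _ _ [set` F]) => //.
by move=> g; rewrite /supp /indicator /=; case: ifP => // _; rewrite eqxx.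
Qed.

(* Part (i), finite fibre: ⟨L(γ)f, δ_β⟩ = L(γ)f(β) is bounded by |m_γ^{-1}(β)| ‖f‖. *)
Lemma delta_in_adj_dom γ β : c β = c γ -> finite_set (P γ β) ->
  adj_dom d c mul τ γ (delta R β).
Proof.
move=> cb finP; split; first exact: l2sp_delta.
exists (#|` fset_set (P γ β)|)%:R => f [[_ fin] _].
rewrite ip_delta /cabs /l2norm.
exact: sqrt_le_nat_scale (fine_l2n2_ge0 f) (Lop_pointwise_le finP (leqnn _) fin).
Qed.

(* Testing the adjoint estimate against 1_F, F ⊆ m_γ^{-1}(β), gives |F| |g β|² ≤ K². *)
Lemma adjoint_bound_fibre γ β g (K : R) (F : {fset Γ}) : [set` F] `<=` P γ β ->
  (forall f, findom c τ (τ (d γ)) f -> cabs (ip (L γ f) g) <= K * l2norm f) ->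
  #|` F|%:R * sqn (g β) <= K ^+ 2.
Proof.
move=> FP HK; have := HK _ (findom_indicator 1 FP).
rewrite (Lop_indicator _ FP) ip_indicator1 /l2norm l2n2_indicator /= /cabs.
rewrite sqnM sqn_conj mulr1 sqn_nat sqn1 mulr1 => h.
have := ler_sqr_scale (sqrtr_ge0 _) h.
rewrite !sqr_sqrtr ?mulr_ge0 ?exprn_ge0 ?ler0n ?sqn_ge0 // => h2.
have [->|Fpos] := posnP #|` F|; first by rewrite mul0r sqr_ge0.
rewrite -(ler_pM2l (_ : 0 < #|` F|%:R)) ?ltr0n // mulrA -expr2; apply: le_trans h2 _.
by rewrite mulrC.
Qed.

(* Part (i), infinite fibre: |F| |g β|² ≤ K² for arbitrarily large F forces g β = 0. *)
Lemma adj_dom_orth_delta γ β : infinite_set (P γ β) ->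
  forall g, adj_dom d c mul τ γ g -> ip g (delta R β) = 0.
Proof.
move=> inf g [_ [K HK]]; rewrite ip_delta; apply: sqn_eq0.
have bound n : n%:R * sqn (g β) <= K ^+ 2.
  have [F FP Fn] := infinite_set_fset n inf.
  apply: le_trans (adjoint_bound_fibre FP HK).
  by apply: ler_wpM2r; [exact: sqn_ge0 | rewrite ler_nat].
apply/eqP; rewrite eq_le sqn_ge0 andbT leNgt; apply/negP => spos.
pose n := Num.Def.archi_bound (K ^+ 2 / sqn (g β)).
have hn : K ^+ 2 / sqn (g β) < n%:R.
  by apply: archi_boundP; rewrite divr_ge0 ?sqr_ge0 ?sqn_ge0.
have := bound n; rewrite -(ler_pdivlMr _ _ spos) => h.
by have := lt_le_trans hn h; rewrite ltxx.
Qed.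

(* Closability fails at an infinite fibre: u_n = 1_{F_n}/|F_n| tends to 0 while
   L(γ) u_n = δ_β for all n. *)
Lemma closable_finite_fibre γ β : c β = c γ -> closable R d c mul τ γ ->
  finite_set (P γ β).
Proof.
move=> cb cl; apply: contrapT => /infinite_large_subsets [Fs HF].
have card_gt0 n : (0 < #|` Fs n|)%N by apply: leq_ltn_trans (HF n).2.
have card_neq0 n : (#|` Fs n|%:R : R) != 0 by rewrite pnatr_eq0 -lt0n.
pose t n : R[i] := (#|` Fs n|%:R)^-1.
have mt n : #|` Fs n|%:R * t n = 1 by rewrite mulfV // pnatr_eq0 -lt0n.
pose u n := indicator (Fs n) (t n).
have Lu n : L γ (u n) = delta R β.
  by rewrite (Lop_indicator _ (HF n).1) mt delta_indicator.
have l2u n : l2n2 (u n) = ((#|` Fs n|%:R)^-1)%:E.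
  have := congr1 (@sqn R) (mt n); rewrite sqnM sqn_nat sqn1 => e.
  rewrite l2n2_indicator; congr EFin; apply: (mulfI (card_neq0 n)).
  by rewrite mulrA -expr2 e mulfV.
have u0 : l2n2 (u n) @[n --> \oo] --> 0%E.
  apply/fine_cvgP; split; first by apply: nearW => n; rewrite l2u.
  apply: (@squeeze_cvgr _ _ _ R (fun=> 0) harmonic); [|exact: cvg_cst|exact: cvg_harmonic].
  apply: nearW => n; rewrite /= l2u /= invr_ge0 ler0n /= lef_pV2 ?posrE ?ltr0n //.
  by rewrite ler_nat (HF n).2.
have Lu0 : l2n2 (fun i => L γ (u n) i - delta R β i) @[n --> \oo] --> 0%E.
  suff -> : (fun n => l2n2 (fun i => L γ (u n) i - delta R β i)) = (fun=> 0%E).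
    exact: cvg_cst.
  by apply: funext => n; rewrite Lu /l2n2 esum1 // => i _; rewrite subrr sqn0.
have := cl u (delta R β) (fun n => findom_indicator _ (HF n).1) (l2sp_delta cb) u0 Lu0.
by move=> /(congr1 (fun h => h β)); rewrite /delta eqxx => /eqP; rewrite oner_eq0.
Qed.

Lemma Lop_support γ f a : is_semigroupoid d c mul -> L γ f a != 0 -> c a = c γ.
Proof.
case=> _ _ _ hc _ ne; have [//|nc] := pselect (c a = c γ).
move: ne; rewrite /Lop fsbig1 ?eqxx // => b [cb e].
by case: nc; rewrite -e hc.
Qed.

Lemma fibre_outside_empty γ a : is_semigroupoid d c mul -> c a <> c γ -> P γ a = set0.
Proof.
case=> _ _ _ hc _ ne; apply/seteqP; split => // b [cb ab].
by apply: ne; rewrite -ab hc.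
Qed.

(* Point evaluation at a finite fibre is continuous: h(a) is controlled by the
   ℓ²-sizes of u and of L(γ)u − h. *)
Lemma pointwise_approx γ (u h : vec R Γ) a : finite_set (P γ a) -> (l2n2 u < +oo)%E ->
  (l2n2 (fun i => (L γ u i - h i)%R) < +oo)%E ->
  sqn (h a) <= 2 * (#|` fset_set (P γ a)|%:R * fine (l2n2 u)
                    + fine (l2n2 (fun i => L γ u i - h i))).
Proof.
move=> finP ufin vfin.
have := sqnD_le (L γ u a) (h a - L γ u a); rewrite addrC subrK sqnB => e.
apply: le_trans e _; apply: ler_wpM2l => //; apply: lerD.
  exact: Lop_pointwise_le.
exact: (@term_le_l2n2 _ _ (fun i => (L γ u i - h i)%R) a vfin).
Qed.

Lemma finite_fibres_closable γ : is_semigroupoid d c mul ->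
  (forall β, c β = c γ -> finite_set (P γ β)) -> closable R d c mul τ γ.
Proof.
move=> sg hfin u h _ _ u0 Luh; apply: funext => a; apply: sqn_eq0.
have finPa : finite_set (P γ a).
  have [ca|nca] := pselect (c a = c γ); first exact: hfin.
  by rewrite (fibre_outside_empty sg nca).
have /fine_cvgP [ufin ucv] := u0; have /fine_cvgP [vfin vcv] := Luh.
set N := #|` fset_set (P γ a)|.
pose x n := 2 * (N%:R * fine (l2n2 (u n)) + fine (l2n2 (fun i => L γ (u n) i - h i))).
have x0 : x n @[n --> \oo] --> (2 * (N%:R * 0 + 0) : R).
  exact: (cvgM (cvg_cst _) (cvgD (cvgM (cvg_cst _) ucv) vcv)).
have : sqn (h a) <= lim (x n @[n --> \oo]).
  apply: limr_ge; first by apply/cvg_ex; eexists; exact: x0.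
  near=> n; apply: pointwise_approx => //.
  - by rewrite -ge0_fin_numE ?l2n2_ge0 //; near: n; exact: ufin.
  - by rewrite -ge0_fin_numE ?l2n2_ge0 //; near: n; exact: vfin.
rewrite (cvg_lim (@Rhausdorff R) x0) mulr0 addr0 mulr0 => le0.
by apply/eqP; rewrite eq_le le0 sqn_ge0.
Unshelve. all: end_near.
Qed.

Lemma fibres_le_of_card γ (N : nat) : is_semigroupoid d c mul ->
  (forall β, c β = c γ -> (P γ β #<= `I_N)%card) -> fibres_le γ N.
Proof.
move=> sg hN a; have [ca|nca] := pselect (c a = c γ).
  split; first by apply/finite_set_leP; exists N; apply: hN.
  exact: geq_card_fset_set (hN a ca).
by rewrite (fibre_outside_empty sg nca) fset_set0 cardfs0.
Qed.

(* Part (ii), necessity: ‖L(γ) 1_F‖ = |F| and ‖1_F‖ = √|F|, so |F| ≤ K². *)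
Lemma bounded_fibre_card γ : Lbounded R d c mul τ γ ->
  exists N : nat, forall β, c β = c γ -> (P γ β #<= `I_N)%card.
Proof.
case=> K HK; exists (Num.Def.archi_bound (K ^+ 2)) => β cb.
set N := Num.Def.archi_bound _.
apply: contrapT => /large_subset_of_not_card_le [F FP FN].
have := HK _ (findom_indicator 1 FP).
rewrite (Lop_indicator _ FP) /l2norm !l2n2_indicator /= cardfs1 mul1r mulr1 sqn1 mulr1.
rewrite sqn_nat sqrtr_sqr ger0_norm ?ler0n // => h.
have := ler_sqr_scale (ler0n _ _) h; rewrite sqr_sqrtr ?ler0n // => h2.
have Fpos : (0 : R) < #|` F|%:R by rewrite ltr0n; apply: leq_ltn_trans (leq0n N) FN.
have FK : #|` F|%:R <= K ^+ 2 by rewrite -(ler_pM2r Fpos) -expr2.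
have NF : N%:R < #|` F|%:R :> R by rewrite ltr_nat.
have := lt_trans (archi_boundP (sqr_ge0 K)) NF.
by rewrite ltNge FK.
Qed.

(* Images of L(α) and L(β) with c α ≠ c β have disjoint supports, hence are orthogonal. *)
Lemma Lop_orthogonal a b f g : is_semigroupoid d c mul -> c a <> c b ->
  ip (L a f) (L b g) = 0.
Proof.
move=> sg ne; rewrite /ip (@csum_finite_support _ _ fset0) ?big_seq_fset0 // => i _.
have [->|ha] := eqVneq (L a f i) 0; first by rewrite mul0r.
have [->|hb] := eqVneq (L b g i) 0; first by rewrite conjc0 mulr0.
by case: ne; rewrite -(Lop_support sg ha) (Lop_support sg hb).
Qed.

Definition off_domain (γ : Γ) f : vec R Γ := fun i => if `[< c i = d γ >] then 0 else f i.

Lemma Lop_off_domain γ f : L γ (off_domain γ f) = (fun=> 0).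
Proof.
apply: funext => a; apply: fsbig1 => b [cb _].
by rewrite /off_domain; case: asboolP.
Qed.

Lemma off_domain_l2sp γ (x : X) f : l2sp c τ x f -> l2sp c τ x (off_domain γ f).
Proof.
move=> [supf fin]; split.
  by move=> g ng; rewrite /off_domain; case: asboolP => // _; exact: supf.
apply: le_lt_trans fin; apply: le_esum => i _; rewrite lee_fin /off_domain.
by case: asboolP => _ //; rewrite sqn0 sqn_ge0.
Qed.

(* ⟨f, off_domain f⟩ = Σ_{c i ≠ d γ} |f i|²; its vanishing confines f to Γ^{d γ}. *)
Lemma ip_off_domain_eq0 γ f : (l2n2 f < +oo)%E -> ip f (off_domain γ f) = 0 ->
  forall i, c i <> d γ -> f i = 0.
Proof.
move=> fin ip0 i ni; apply: sqn_eq0.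
pose v j := if `[< c j = d γ >] then 0 else sqn (f j).
have v0 j : 0 <= v j by rewrite /v; case: asboolP => _ //; apply: sqn_ge0.
have vfin : (\esum_(j in [set: Γ]) (v j)%:E < +oo)%E.
  apply: le_lt_trans fin; apply: le_esum => j _; rewrite lee_fin /v.
  by case: asboolP => _ //; rewrite sqn_ge0.
have ev : (fun j => re (f j * conjc (off_domain γ f j))) = v.
  apply: funext => j; rewrite /v /off_domain; case: asboolP => _; last exact: re_mulconj.
  by rewrite conjc0 mulr0.
have rv : rsum v = 0 by rewrite -ev; exact: (congr1 (@re R) ip0).
by have := rsum_ge0_eq0 v0 vfin rv i; rewrite /v; case: asboolP.
Qed.

Section InjectiveProducts.
Hypothesis mul_inj : forall γ b1 b2, c b1 = d γ -> c b2 = d γ ->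
  mul γ b1 = mul γ b2 -> b1 = b2.

Lemma fibres_le_one γ : fibres_le γ 1.
Proof.
move=> a; have [[b [cb e]]|nb] := pselect (exists b, P γ a b).
  have -> : P γ a = [set b].
    apply/seteqP; split => [x [cx ex]|x -> //].
    by apply: (mul_inj cx cb); rewrite ex e.
  by rewrite fset_set1 cardfs1; split => //; apply: finite_set1.
have -> : P γ a = set0 by apply/seteqP; split => // x Px; case: nb; exists x.
by rewrite fset_set0 cardfs0.
Qed.

Lemma Lop_image γ f b : c b = d γ -> L γ f (mul γ b) = f b.
Proof.
move=> cb; rewrite /Lop.
have -> : [set b0 | c b0 = d γ /\ mul γ b0 = mul γ b] = [set b].
  by apply/seteqP; split => [x [cx e]|x -> //]; exact: (mul_inj cx cb e).
by rewrite fsbig_set1.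
Qed.

(* L(γ) is then given by the same formula on all of ℓ² and is a contraction. *)
Lemma Lop_bounded_linear γ : is_semigroupoid d c mul ->
  bounded_linear c τ (τ (d γ)) (τ (c γ)) (@Lop R Γ S d c mul γ).
Proof.
move=> sg; split.
- move=> f [supf fin]; split; last first.
    by apply: le_lt_trans (l2n2_Lop_le (fibres_le_one γ) fin) (ltry _).
  move=> a na; apply/eqP; apply: contraT => /(Lop_support sg) ca.
  by case: na; rewrite ca.
- move=> k f g _ _; apply: funext => a.
  have [[b [cb <-]]|nb] := pselect (exists b, c b = d γ /\ mul γ b = a).
    by rewrite !Lop_image.
  have nim b : c b = d γ -> mul γ b <> a by move=> cb e; apply: nb; exists b.
  by rewrite !(Lop_off_image _ nim) mulr0 addr0.
- by exists 1 => f [_ fin]; exact: (l2norm_Lop_le (fibres_le_one γ) fin).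
Qed.

Lemma l2n2_Lop_supported γ f : (forall i, c i <> d γ -> f i = 0) ->
  l2n2 (L γ f) = l2n2 f.
Proof.
move=> hf; rewrite /l2n2.
transitivity (\esum_(a in (mul γ) @` (fun b => c b = d γ)) (sqn (L γ f a))%:E).
  rewrite [in RHS]esum_mkcond; apply: eq_esum => a _; case: ifPn => // ha.
  move: ha; rewrite notin_setE => ha.
  by rewrite Lop_off_image ?sqn0 // => b cb e; apply: ha; exists b.
rewrite esum_image; last by move=> b1 b2; rewrite !in_setE; exact: mul_inj.
transitivity (\esum_(i in fun b => c b = d γ) (sqn (f i))%:E).
  by apply: eq_esum => b cb; rewrite Lop_image.
rewrite esum_mkcond; apply: eq_esum => b _; case: ifPn => //.
by rewrite notin_setE => ncb; rewrite hf // sqn0.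
Qed.

(* Part (iii): a vector orthogonal to ker L(γ) is orthogonal to its own component
   outside Γ^{d γ}, hence supported in Γ^{d γ}, where L(γ) is isometric. *)
Lemma Lop_partial_isometry γ : partial_isometry c τ (τ (d γ)) (@Lop R Γ S d c mul γ).
Proof.
move=> f hf orth; rewrite /l2norm l2n2_Lop_supported //.
apply: (ip_off_domain_eq0 hf.2).
exact: orth _ (off_domain_l2sp γ hf) (Lop_off_domain γ f).
Qed.

Lemma Lop_comp a b f : is_semigroupoid d c mul -> d a = c b ->
  L (mul a b) f = L a (L b f).
Proof.
case=> _ _ hd hc hassoc dacb; apply: funext => x.
have [[y [cy <-]]|ny] := pselect (exists y, c y = d b /\ mul (mul a b) y = x).
  rewrite Lop_image; last by rewrite (hd _ _ dacb).
  rewrite (hassoc _ _ _ dacb (esym cy)) Lop_image; last by rewrite (hc _ _ (esym cy)) dacb.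
  by rewrite Lop_image.
rewrite Lop_off_image; last by move=> y; rewrite (hd _ _ dacb) => cy e; apply: ny; exists y.
have [[z [cz ez]]|nz] := pselect (exists z, c z = d a /\ mul a z = x).
  rewrite -ez Lop_image // Lop_off_image // => y cy e; apply: ny; exists y; split => //.
  by rewrite (hassoc _ _ _ dacb (esym cy)) e ez.
by rewrite Lop_off_image // => z cz e; apply: nz; exists z.
Qed.

End InjectiveProducts.

End RegularOperator.

Theorem mainTheorem13 (R : realType) (Γ : choiceType) (S X : Type)
  (d c : Γ -> S) (mul : Γ -> Γ -> Γ) (τ : S -> X) :
  is_semigroupoid d c mul ->
  (* (i) *)
  (forall γ β : Γ, c β = c γ ->
     (finite_set (m_pre d c mul γ β) ->
        adj_dom (R:=R) d c mul τ γ (delta R β)) /\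
     (infinite_set (m_pre d c mul γ β) ->
        forall g, adj_dom (R:=R) d c mul τ γ g -> ip g (delta R β) = 0)) /\
  (forall γ : Γ, closable R d c mul τ γ <->
     (forall β, c β = c γ -> finite_set (m_pre d c mul γ β))) /\
  (* (ii) *)
  (forall γ : Γ,
     (Lbounded R d c mul τ γ <->
       exists N : nat, forall β, c β = c γ -> (m_pre d c mul γ β #<= `I_N)%card) /\
     (forall N : nat, (forall β, c β = c γ -> (m_pre d c mul γ β #<= `I_N)%card) ->
        Lnorm_le (R:=R) d c mul τ γ N%:R)) /\
  (* (iii) *)
  ((forall γ β β' : Γ, c β = d γ -> c β' = d γ -> β <> β' -> mul γ β <> mul γ β') ->
   exists Φ : Γ -> vec R Γ -> vec R Γ,
     (forall γ, (forall f, findom c τ (τ (d γ)) f -> Φ γ f = Lop d c mul γ f) /\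
                partial_isometry c τ (τ (d γ)) (Φ γ)) /\
     is_orthogonal_rep d c mul τ Φ).
Proof.
move=> sg; split; [|split; [|split]].
- by move=> γ β cb; split; [exact: delta_in_adj_dom | exact: adj_dom_orth_delta].
- move=> γ; split; last exact: finite_fibres_closable.
  by move=> cl β cb; exact: closable_finite_fibre cl.
- move=> γ; have norm_bound N : (forall β, c β = c γ -> (m_pre d c mul γ β #<= `I_N)%card) ->
      Lnorm_le (R:=R) d c mul τ γ N%:R.
    by move=> hN f [[_ fin] _]; exact: l2norm_Lop_le (fibres_le_of_card sg hN) fin.
  split=> //; split; first exact: bounded_fibre_card.
  by case=> N hN; exists N%:R; exact: norm_bound.
- move=> distinct.
  have mul_inj γ b1 b2 : c b1 = d γ -> c b2 = d γ -> mul γ b1 = mul γ b2 -> b1 = b2.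
    by move=> h1 h2 e; apply: contrapT => ne; exact: distinct γ b1 b2 h1 h2 ne e.
  exists (@Lop R Γ S d c mul); split.
    by move=> γ; split=> //; exact: (Lop_partial_isometry mul_inj).
  split; first split.
  + by move=> γ; apply: Lop_bounded_linear.
  + by move=> a b dab f _; apply: Lop_comp.
  + by move=> a b _ ne f g _ _; exact: Lop_orthogonal.
Qed.
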